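(* Let $F$ be any one of the functions $H_{\mathrm{pen}}$, $V_{\mathrm{pen}}$, $W_{\mathrm{pen}}$, $U$ on $\Lambda^M$ defined below (for a fixed realization of $\mathbf y$). Then $F$ is convex and differentiable, and for all $\boldsymbol\theta,\boldsymbol\theta_0\in\Lambda^M$, \[F(\boldsymbol\theta)=F(\boldsymbol\theta_0)+\nabla F(\boldsymbol\theta_0)^T(\boldsymbol\theta-\boldsymbol\theta_0)+\tfrac12\|\hat{\boldsymbol\mu}_{\boldsymbol\theta}-\hat{\boldsymbol\mu}_{\boldsymbol\theta_0}\|_2^2.\] Furthermore, if $\hat{\boldsymbol\theta}$ is a minimizer of $F$ over $\Lambda^M$, then for all $\boldsymbol\theta\in\Lambda^M$, $F(\boldsymbol\theta)\ge F(\hat{\boldsymbol\theta})+\tfrac12\|\hat{\boldsymbol\mu}_{\boldsymbol\theta}-\hat{\boldsymbol\mu}_{\hat{\boldsymbol\theta}}\|_2^2$.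
   Context: Data $\mathbf y\in\mathbf R^n$; for $j=1,\dots,M$, $\hat{\boldsymbol\mu}_j=A_j\mathbf y+\mathbf b_j$ with $n\times n$ matrices $A_j$ and $\mathbf b_j\in\mathbf R^n$. $\Lambda^M=\{\boldsymbol\theta\in\mathbf R^M:\sum_j\theta_j=1,\theta_j\ge0\}$; $A_{\boldsymbol\theta}=\sum_j\theta_jA_j$, $\mathbf b_{\boldsymbol\theta}=\sum_j\theta_j\mathbf b_j$, $\hat{\boldsymbol\mu}_{\boldsymbol\theta}=A_{\boldsymbol\theta}\mathbf y+\mathbf b_{\boldsymbol\theta}$. $\mathrm{pen}(\boldsymbol\theta)=\sum_j\theta_j\|\hat{\boldsymbol\mu}_{\boldsymbol\theta}-\hat{\boldsymbol\mu}_j\|_2^2$. With $\sigma^2>0$, $\hat\sigma^2\in\mathbf R$, $\hat K^2\ge0$ and $\boldsymbol\pi\in\Lambda^M$ with positive entries: $H_{\mathrm{pen}}(\boldsymbol\theta)=\|\hat{\boldsymbol\mu}_{\boldsymbol\theta}\|_2^2-2\mathbf y^T\hat{\boldsymbol\mu}_{\boldsymbol\theta}+2\sigma^2\mathrm{Tr}(A_{\boldsymbol\theta})+\frac12\mathrm{pen}(\boldsymbol\theta)$; $V_{\mathrm{pen}}(\boldsymbol\theta)=H_{\mathrm{pen}}(\boldsymbol\theta)+46\sigma^2\sum_j\theta_j\log(1/\pi_j)$; $W_{\mathrm{pen}}(\boldsymbol\theta)=\|\hat{\boldsymbol\mu}_{\boldsymbol\theta}\|_2^2-2\mathbf y^T\hat{\boldsymbol\mu}_{\boldsymbol\theta}+2\hat\sigma^2\mathrm{Tr}(A_{\boldsymbol\theta})+\frac12\mathrm{pen}(\boldsymbol\theta)$;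 $U(\boldsymbol\theta)=\|\hat{\boldsymbol\mu}_{\boldsymbol\theta}\|_2^2-2\mathbf y^T\hat{\boldsymbol\mu}_{\boldsymbol\theta}+\frac12\mathrm{pen}(\boldsymbol\theta)+32\hat K^2\sum_j\theta_j\log(1/\pi_j)$. These functions are polynomials in $\boldsymbol\theta\in\mathbf R^M$, and $\nabla F$ is their gradient. *)

From HB Require Import structures.
From mathcomp Require Import all_boot all_order all_algebra.
From mathcomp Require Import all_classical all_reals all_analysis.
Set Implicit Arguments. Unset Strict Implicit. Unset Printing Implicit Defensive.
Import Order.TTheory GRing.Theory Num.Theory.
Import numFieldNormedType.Exports.
Local Open Scope ring_scope.

Section Aggregation.
Variables (R : realType) (n M : nat).

Definition dotv (k : nat) (u v : 'cV[R]_k) : R := \sum_(i < k) u i 0 * v i 0.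
Definition sqnorm (k : nat) (v : 'cV[R]_k) : R := \sum_(i < k) v i 0 ^+ 2.

Definition simplex (th : 'cV[R]_M) : Prop :=
  (forall j, 0 <= th j 0) /\ \sum_(j < M) th j 0 = 1.

Variables (y : 'cV[R]_n) (A : 'I_M -> 'M[R]_n) (b : 'I_M -> 'cV[R]_n).

Definition A_th (th : 'cV[R]_M) : 'M[R]_n := \sum_(j < M) th j 0 *: A j.
Definition b_th (th : 'cV[R]_M) : 'cV[R]_n := \sum_(j < M) th j 0 *: b j.
Definition mu_j (j : 'I_M) : 'cV[R]_n := A j *m y + b j.
Definition mu_th (th : 'cV[R]_M) : 'cV[R]_n := A_th th *m y + b_th th.

Definition pen (th : 'cV[R]_M) : R :=
  \sum_(j < M) th j 0 * sqnorm (mu_th th - mu_j j).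

Definition KL_pi (pi : 'I_M -> R) (th : 'cV[R]_M) : R :=
  \sum_(j < M) th j 0 * ln (pi j)^-1.

Definition Hpen (sig2 : R) (th : 'cV[R]_M) : R :=
  sqnorm (mu_th th) - 2 * dotv y (mu_th th) + 2 * sig2 * \tr (A_th th)
  + 2^-1 * pen th.

Definition Vpen (sig2 : R) (pi : 'I_M -> R) (th : 'cV[R]_M) : R :=
  Hpen sig2 th + 46 * sig2 * KL_pi pi th.

Definition Wpen (sighat2 : R) (th : 'cV[R]_M) : R :=
  sqnorm (mu_th th) - 2 * dotv y (mu_th th) + 2 * sighat2 * \tr (A_th th)
  + 2^-1 * pen th.

Definition Ufun (Khat2 : R) (pi : 'I_M -> R) (th : 'cV[R]_M) : R :=
  sqnorm (mu_th th) - 2 * dotv y (mu_th th) + 2^-1 * pen th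
  + 32 * Khat2 * KL_pi pi th.

End Aggregation.

Definition grad (R : realType) (M : nat) (F : 'cV[R]_M -> R) (th0 : 'cV[R]_M)
  : 'cV[R]_M := \col_(i < M) derive F th0 (delta_mx i 0 : 'cV[R]_M).

Definition convex_on (R : realType) (M : nat) (S : 'cV[R]_M -> Prop)
  (F : 'cV[R]_M -> R) : Prop :=
  forall th1 th2 (t : R), S th1 -> S th2 -> 0 <= t <= 1 ->
    F (t *: th1 + (1 - t) *: th2) <= t * F th1 + (1 - t) * F th2.

From HB Require Import structures.
From mathcomp Require Import all_boot all_order all_algebra.
From mathcomp Require Import all_classical all_reals all_analysis.
From mathcomp Require Import ring lra.
Set Implicit Arguments. Unset Strict Implicit. Unset Printing Implicit Defensive.
Import Order.TTheory GRing.Theory Num.Theory.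
Import numFieldNormedType.Exports.
Local Open Scope ring_scope.

(* All four criteria have the form
     G(th) = 1/2 (sum_j th_j) ||mu_th||^2 + sum_j th_j a_j,
   since pen(th) = (sum_j th_j) ||mu_th||^2 - 2 ||mu_th||^2 + sum_j th_j ||mu_j||^2
   and mu_th is linear in th.  G is a cubic polynomial on R^M, hence differentiable.
   Along a segment th0 + t (th - th0) of the simplex the factor sum_j th_j is
   constantly 1, so G is exactly quadratic in t with leading coefficient
   1/2 ||mu_th - mu_th0||^2.  This gives the Taylor identity and convexity, and
   at a minimizer the linear coefficient is nonnegative, which gives the growth
   bound.  No sign condition on sigma^2, Khat^2 or pi is needed. *)

Section CubicDerivative.
Local Open Scope classical_set_scope.

Lemma derive_cubic_expansion (R : realType) (V : normedModType R) (f : V -> R)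
    (a v : V) (c1 c2 c3 : R) :
  (forall h : R, f (h *: v + a) = f a + h * c1 + h ^+ 2 * c2 + h ^+ 3 * c3) ->
  derive f a v = c1.
Proof.
move=> hf; rewrite /derive.
have quotE : \forall h \near 0^',
    c1 + h * c2 + h ^+ 2 * c3 = h^-1 *: ((f \o shift a) (h *: v) - f a).
  near=> h.
  have h0 : h != 0 by near: h; exact: nbhs_dnbhs_neq.
  by rewrite /= /shift hf /GRing.scale /=; field.
have lim_poly : (fun h : R => c1 + h * c2 + h ^+ 2 * c3) @ 0^'
                  --> c1 + 0 * c2 + 0 ^+ 2 * c3.
  apply: cvg_within_filter; apply: cvgD.
    by apply: cvgD; [exact: cvg_cst | apply: cvgM; [exact: cvg_id | exact: cvg_cst]].
  apply: cvgM; last exact: cvg_cst.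
  under eq_fun do rewrite expr2.
  by rewrite expr2; apply: cvgM; exact: cvg_id.
rewrite mul0r expr0n /= mul0r !addr0 in lim_poly.
apply: cvg_lim => //; apply: cvg_trans lim_poly.
by apply: near_eq_cvg; near=> h; near: h; exact: quotE.
Unshelve. all: by end_near.
Qed.

End CubicDerivative.

Lemma ge0_of_quadratic_lower_bound (R : realFieldType) (D q : R) : 0 <= q ->
  (forall t, 0 < t -> t <= 1 -> 0 <= t * D + t ^+ 2 * q) -> 0 <= D.
Proof.
move=> q0 lb; rewrite leNgt; apply/negP => Dneg.
have qD : 0 < q - D by lra.
(* at this t in (0, 1] the lower bound equals t^2 D < 0 *)
pose t := - D / (q - D).
have tqD : t * (q - D) = - D by rewrite /t mulfVK // gt_eqF.
have t0 : 0 < t by rewrite /t divr_gt0 // oppr_gt0.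
have t1 : t <= 1 by rewrite /t ler_pdivrMr // mul1r; lra.
have ttqD : t * (t * (q - D)) = t * - D by rewrite tqD.
have : 0 < t * t * - D by apply: mulr_gt0; [exact: mulr_gt0 | lra].
have := lb t t0 t1; nra.
Qed.

Section EuclideanForm.
Variables (R : realType) (k : nat).
Implicit Types (u v w : 'cV[R]_k).

Lemma dotvC u v : dotv u v = dotv v u.
Proof. by apply: eq_bigr => i _; rewrite mulrC. Qed.

Lemma sqnorm_dotv u : sqnorm u = dotv u u.
Proof. by apply: eq_bigr => i _; rewrite expr2. Qed.

Lemma sqnormDZ h u w :
  sqnorm (h *: u + w) = h ^+ 2 * sqnorm u + 2 * h * dotv u w + sqnorm w.
Proof.
rewrite /sqnorm /dotv !mulr_sumr -!big_split /=.
by apply: eq_bigr => i _; rewrite !mxE; ring.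
Qed.

Lemma sqnorm_ge0 u : 0 <= sqnorm u.
Proof. by apply: sumr_ge0 => i _; rewrite sqr_ge0. Qed.

End EuclideanForm.

Section Criterion.
Variables (R : realType) (n M : nat) (m : 'I_M -> 'cV[R]_n).
Implicit Types (th v w : 'cV[R]_M) (c : 'I_M -> R).

Definition lincomb c th : R := \sum_(j < M) th j 0 * c j.
Definition csum th : R := \sum_(j < M) th j 0.
Definition mixture th : 'cV[R]_n := \sum_(j < M) th j 0 *: m j.
Definition criterion c th : R :=
  2^-1 * (csum th * sqnorm (mixture th)) + lincomb c th.

Lemma lincombDZ c h v w : lincomb c (h *: v + w) = h * lincomb c v + lincomb c w.
Proof.
by rewrite /lincomb mulr_sumr -big_split /=; apply: eq_bigr => j _; rewrite !mxE; ring.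
Qed.

Lemma csumDZ h v w : csum (h *: v + w) = h * csum v + csum w.
Proof. by rewrite /csum mulr_sumr -big_split /=; apply: eq_bigr => j _; rewrite !mxE. Qed.

Lemma csumB v w : csum (v - w) = csum v - csum w.
Proof. by rewrite /csum -sumrB; apply: eq_bigr => j _; rewrite !mxE. Qed.

Lemma mixtureDZ h v w : mixture (h *: v + w) = h *: mixture v + mixture w.
Proof.
rewrite /mixture scaler_sumr -big_split /=; apply: eq_bigr => j _.
by rewrite !mxE scalerDl scalerA.
Qed.

Lemma mixtureB v w : mixture (v - w) = mixture v - mixture w.
Proof. by rewrite -scaleN1r addrC mixtureDZ addrC scaleN1r. Qed.

Lemma lincombDl c (f : 'I_M -> R) k th :
  lincomb (fun j => c j + k * f j) th = lincomb c th + k * lincomb f th.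
Proof.
by rewrite /lincomb mulr_sumr -big_split /=; apply: eq_bigr => j _; ring.
Qed.

Lemma lincombZl (f : 'I_M -> R) k th :
  lincomb (fun j => k * f j) th = k * lincomb f th.
Proof. by rewrite /lincomb mulr_sumr; apply: eq_bigr => j _; ring. Qed.

Lemma lincomb_delta c i : lincomb c (delta_mx i 0) = c i.
Proof.
rewrite /lincomb (bigD1 i) //= big1 => [|j ji]; rewrite mxE ?eqxx ?(negbTE ji) /=.
  by rewrite mul1r addr0.
by rewrite mul0r.
Qed.

Lemma csum_lincomb : csum = lincomb (fun=> 1).
Proof. by apply: funext => v; apply: eq_bigr => j _; rewrite mulr1. Qed.

Lemma csum_delta i : csum (delta_mx i 0) = 1.
Proof. by rewrite csum_lincomb lincomb_delta. Qed.

Lemma mixture_delta i : mixture (delta_mx i 0) = m i.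
Proof.
rewrite /mixture (bigD1 i) //= big1 => [|j ji]; rewrite mxE ?eqxx ?(negbTE ji) /=.
  by rewrite scale1r addr0.
by rewrite scale0r.
Qed.

Lemma dotv_mixturel w (u : 'cV[R]_n) :
  dotv (mixture w) u = lincomb (fun j => dotv (m j) u) w.
Proof.
rewrite /dotv /mixture /lincomb.
under eq_bigr => i _ do rewrite summxE big_distrl /=.
rewrite exchange_big /=; apply: eq_bigr => j _; rewrite mulr_sumr.
by apply: eq_bigr => i _; rewrite !mxE; ring.
Qed.

Lemma criterion_expansion c h v th :
  criterion c (h *: v + th) = criterion c th
   + h * (2^-1 * (csum v * sqnorm (mixture th)
                  + 2 * csum th * dotv (mixture v) (mixture th)) + lincomb c v)
   + h ^+ 2 * (2^-1 * (2 * csum v * dotv (mixture v) (mixture th)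
                       + csum th * sqnorm (mixture v)))
   + h ^+ 3 * (2^-1 * (csum v * sqnorm (mixture v))).
Proof. by rewrite /criterion csumDZ lincombDZ mixtureDZ sqnormDZ; ring. Qed.

Lemma lincomb_differentiable c th : differentiable (lincomb c) th.
Proof.
rewrite /lincomb -fct_sumE; apply: differentiable_sum => j.
exact: differentiableM (differentiable_coord _ _ _) (differentiable_cst _ _).
Qed.

Lemma criterion_differentiable c th : differentiable (criterion c) th.
Proof.
have sqnorm_mixtureE : (fun v => sqnorm (mixture v)) =
    \sum_(i < n) (lincomb (fun j => m j i 0) \* lincomb (fun j => m j i 0)).
  apply: funext => v; rewrite fct_sumE /= /sqnorm; apply: eq_bigr => i _.
  by rewrite expr2 /mixture summxE; under eq_bigr do rewrite mxE.
apply: differentiableD; last exact: lincomb_differentiable.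
apply: differentiableM; first exact: differentiable_cst.
rewrite csum_lincomb; apply: differentiableM; first exact: lincomb_differentiable.
rewrite sqnorm_mixtureE.
by apply: differentiable_sum => i; apply: differentiableM; exact: lincomb_differentiable.
Qed.

Lemma dotv_grad_criterion c th0 w :
  dotv (grad (criterion c) th0) w =
  2^-1 * (csum w * sqnorm (mixture th0)
          + 2 * csum th0 * dotv (mixture w) (mixture th0)) + lincomb c w.
Proof.
rewrite dotv_mixturel {1}/dotv /grad.
under eq_bigr => i _ do rewrite mxE
  (derive_cubic_expansion (fun h => criterion_expansion c h (delta_mx i 0) th0))
  csum_delta lincomb_delta mixture_delta.
rewrite [csum w]/csum /lincomb mulr_suml [2 * csum th0 * _]mulr_sumr.
by rewrite -big_split /= [2^-1 * _]mulr_sumr -big_split /=; apply: eq_bigr => i _; ring.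
Qed.

Lemma simplex_csum th : simplex th -> csum th = 1.
Proof. by case. Qed.

Lemma simplex_segment th th0 t : simplex th -> simplex th0 -> 0 <= t <= 1 ->
  simplex (t *: (th - th0) + th0).
Proof.
move=> s s0 /andP[t0 t1]; split.
  by move=> j; rewrite !mxE; have := s.1 j; have := s0.1 j; nra.
by rewrite -[LHS]/(csum _) csumDZ csumB !simplex_csum // subrr mulr0 add0r.
Qed.

Lemma criterion_segment c th th0 t : simplex th -> simplex th0 ->
  criterion c (t *: (th - th0) + th0) = criterion c th0
    + t * (dotv (mixture (th - th0)) (mixture th0) + lincomb c (th - th0))
    + t ^+ 2 * (2^-1 * sqnorm (mixture th - mixture th0)).
Proof.
move=> s s0; rewrite criterion_expansion -mixtureB csumB !simplex_csum //.
by rewrite subrr; field.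
Qed.

Lemma criterion_taylor c th th0 : simplex th -> simplex th0 ->
  criterion c th = criterion c th0 + dotv (grad (criterion c) th0) (th - th0)
                   + 2^-1 * sqnorm (mixture th - mixture th0).
Proof.
move=> s s0; rewrite -{1}[th](subrK th0) -[th - th0]scale1r criterion_segment //.
by rewrite dotv_grad_criterion scale1r csumB !simplex_csum // subrr; field.
Qed.

Lemma criterion_convex c : convex_on (@simplex R M) (criterion c).
Proof.
move=> th1 th2 t s1 s2 t01.
have -> : t *: th1 + (1 - t) *: th2 = t *: (th1 - th2) + th2.
  by apply/matrixP => i j; rewrite !mxE; ring.
rewrite [in X in _ <= _ * X + _](_ : th1 = 1 *: (th1 - th2) + th2); last first.
  by rewrite scale1r subrK.
rewrite !criterion_segment //.
have := sqnorm_ge0 (mixture th1 - mixture th2).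
set q := sqnorm _; case/andP: t01 => t0 t1 q0.
have : 0 <= t * (1 - t) * q by rewrite !mulr_ge0 // subr_ge0.
nra.
Qed.

Lemma criterion_min_growth c thhat : simplex thhat ->
  (forall th, simplex th -> criterion c thhat <= criterion c th) ->
  forall th, simplex th ->
    criterion c thhat + 2^-1 * sqnorm (mixture th - mixture thhat) <= criterion c th.
Proof.
move=> s0 hmin th s.
pose D := dotv (mixture (th - thhat)) (mixture thhat) + lincomb c (th - thhat).
pose q := 2^-1 * sqnorm (mixture th - mixture thhat).
have D0 : 0 <= D.
  apply: (@ge0_of_quadratic_lower_bound _ _ q).
    by rewrite mulr_ge0 ?sqnorm_ge0.
  move=> t t0 t1; have := hmin _ (simplex_segment s s0 (_ : 0 <= t <= 1)).
  by rewrite criterion_segment // -/D -/q; lra.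
rewrite -[th in X in _ <= X](subrK thhat) -[th - thhat]scale1r criterion_segment //.
by rewrite -/D -/q; lra.
Qed.

End Criterion.

Section Criteria.
Variables (R : realType) (n M : nat) (y : 'cV[R]_n)
  (A : 'I_M -> 'M[R]_n) (b : 'I_M -> 'cV[R]_n).
Local Notation m := (mu_j y A b).

Lemma mu_th_mixture : mu_th y A b = mixture m.
Proof.
apply: funext => th; rewrite /mu_th /mixture /A_th /b_th mulmx_suml -big_split /=.
by apply: eq_bigr => j _; rewrite -scalemxAl -scalerDr.
Qed.

Definition fit_coef (j : 'I_M) : R := 2^-1 * sqnorm (m j) + (-2) * dotv y (m j).

Lemma fit_criterion th :
  sqnorm (mu_th y A b th) - 2 * dotv y (mu_th y A b th) + 2^-1 * pen y A b th
  = criterion m fit_coef th.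
Proof.
rewrite /pen /criterion mu_th_mixture /fit_coef lincombDl lincombZl.
have fitE : dotv y (mixture m th) = lincomb (fun j => dotv y (m j)) th.
  by rewrite dotvC dotv_mixturel; apply: eq_bigr => j _; rewrite dotvC.
have penE : \sum_(j < M) th j 0 * sqnorm (mixture m th - m j) =
    csum th * sqnorm (mixture m th) - 2 * sqnorm (mixture m th)
    + lincomb (fun j => sqnorm (m j)) th.
  rewrite [X in 2 * X]sqnorm_dotv [X in 2 * X]dotv_mixturel.
  rewrite /csum /lincomb mulr_suml mulr_sumr -sumrB -big_split /=.
  by apply: eq_bigr => j _; rewrite [mixture m th - m j]addrC -scaleN1r sqnormDZ; ring.
by rewrite fitE penE; field.
Qed.

Lemma criterion_addl c (f : 'I_M -> R) (k : R) th :
  criterion m (fun j => c j + k * f j) th = criterion m c th + k * lincomb f th.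
Proof. by rewrite /criterion lincombDl addrA. Qed.

Lemma trace_A_th th : \tr (A_th A th) = lincomb (fun j => \tr (A j)) th.
Proof. by rewrite /A_th /lincomb raddf_sum; apply: eq_bigr => j _; exact: mxtraceZ. Qed.

Lemma Hpen_criterion s2 :
  Hpen y A b s2 = criterion m (fun j => fit_coef j + 2 * s2 * \tr (A j)).
Proof.
by apply: funext => th; rewrite criterion_addl -fit_criterion -trace_A_th addrAC.
Qed.

Lemma Wpen_criterion s2 :
  Wpen y A b s2 = criterion m (fun j => fit_coef j + 2 * s2 * \tr (A j)).
Proof. by rewrite -Hpen_criterion. Qed.

Lemma Vpen_criterion s2 pi :
  Vpen y A b s2 pi = criterion m (fun j => fit_coef j + 2 * s2 * \tr (A j)
                                          + 46 * s2 * ln (pi j)^-1).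
Proof. by apply: funext => th; rewrite criterion_addl -Hpen_criterion. Qed.

Lemma Ufun_criterion K2 pi :
  Ufun y A b K2 pi = criterion m (fun j => fit_coef j + 32 * K2 * ln (pi j)^-1).
Proof. by apply: funext => th; rewrite criterion_addl -fit_criterion. Qed.

End Criteria.

Theorem lemma8p1 (R : realType) (n M : nat) (y : 'cV[R]_n)
  (A : 'I_M -> 'M[R]_n) (b : 'I_M -> 'cV[R]_n)
  (sig2 sighat2 Khat2 : R) (pi : 'I_M -> R)
  (hsig2 : 0 < sig2) (hK : 0 <= Khat2)
  (hpi : simplex (\col_(j < M) pi j)) (hpipos : forall j, 0 < pi j)
  (F : 'cV[R]_M -> R)
  (hF : F = Hpen y A b sig2 \/ F = Vpen y A b sig2 pi \/
        F = Wpen y A b sighat2 \/ F = Ufun y A b Khat2 pi) :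
  [/\ convex_on (@simplex R M) F,
      (forall th : 'cV[R]_M, differentiable F th),
      (forall th th0 : 'cV[R]_M, simplex th -> simplex th0 ->
         F th = F th0 + dotv (grad F th0) (th - th0)
                + 2^-1 * sqnorm (mu_th y A b th - mu_th y A b th0))
    & (forall thhat : 'cV[R]_M, simplex thhat ->
         (forall th, simplex th -> F thhat <= F th) ->
         forall th, simplex th ->
           F th >= F thhat + 2^-1 * sqnorm (mu_th y A b th - mu_th y A b thhat))].
Proof.
have [c ->] : exists c, F = criterion (mu_j y A b) c.
  case: hF => [->|[->|[->|->]]].
  - by rewrite Hpen_criterion; eexists.
  - by rewrite Vpen_criterion; eexists.
  - by rewrite Wpen_criterion; eexists.
  - by rewrite Ufun_criterion; eexists.
rewrite mu_th_mixture; split.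
- exact: criterion_convex.
- exact: criterion_differentiable.
- move=> th th0; exact: criterion_taylor.
- exact: criterion_min_growth.
Qed.
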